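(* Let $d_1,d_2\ge1$, $p_{i0}<\cdots<p_{id_i}$ reals, $f_i:\{p_{i0},\dots,p_{id_i}\}\to\mathbb{R}$ ($i=1,2$). Let $\sigma,\tau$, $\psi^\sigma,\psi^\tau$, $N=d_1+d_2$ be as follows: $\sigma_i$ a permutation of $\{0,\dots,d_i\}$ with $f_i(p_{i,\sigma_i(0)})\le\cdots\le f_i(p_{i,\sigma_i(d_i)})$ ($i=1,2$); $\tau_1,\tau_2$ permutations with $f_1(p_{1,\tau_1(0)})\le\cdots\le f_1(p_{1,\tau_1(d_1)})$ and $f_2(p_{2,\tau_2(0)})\ge\cdots\ge f_2(p_{2,\tau_2(d_2)})$; $\psi^\sigma(\boldsymbol{j})=f_1(p_{1,\sigma_1(j_1)})f_2(p_{2,\sigma_2(j_2)})$, $\psi^\tau(\boldsymbol{j})=f_1(p_{1,\tau_1(j_1)})f_2(p_{2,\tau_2(j_2)})$. For $i=1,2$ let $\boldsymbol{\eta}^0_i,\dots,\boldsymbol{\eta}^{d_i}_i$ be distinct vectors in $\{0,1\}^{K_i}$, $K_i=\lceil\log_2(d_i+1)\rceil$, and $A_{ik}=\{t\in\{0,\dots,d_i\}:\eta^t_{ik}=1\}$. Then the set of $(\boldsymbol{x},\boldsymbol{z},\mu,\boldsymbol{\delta})$ satisfying, for $i=1,2$: $\boldsymbol{z}_i\in\Delta^{d_i}$, $\boldsymbol{\delta}_i\in\{0,1\}^{K_i}$, $\sum_{j\in A_{ik}}(z_{ij}-z_{i,j+1})\le\delta_{ik}$ and $\sum_{j\in\{0,\dots,d_i\}\setminus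 A_{ik}}(z_{ij}-z_{i,j+1})\le1-\delta_{ik}$ for $k=1,\dots,K_i$ (with $z_{i0}=1$, $z_{i,d_i+1}=0$), $(x_i,\boldsymbol{z}_i)\in B_i$; together with $\boldsymbol{z}'=(L^\sigma)^{-1}(\boldsymbol{z})$, $\boldsymbol{z}''=(L^\tau)^{-1}(\boldsymbol{z})$ and, for all $\pi\in\Pi$, $$\mu\le\psi^\sigma(\boldsymbol{j}^0)+\sum_{t\in[N]}(\psi^\sigma(\boldsymbol{j}^t)-\psi^\sigma(\boldsymbol{j}^{t-1}))z'_{\pi_t},\qquad\mu\ge\psi^\tau(\boldsymbol{j}^0)+\sum_{t\in[N]}(\psi^\tau(\boldsymbol{j}^t)-\psi^\tau(\boldsymbol{j}^{t-1}))z''_{\pi_t},$$ is an ideal MIP formulation (with binary variables $\boldsymbol{\delta}$ only) of $\{(\boldsymbol{x},\mu):\mu=f_1(x_1)f_2(x_2),\ x_i\in\{p_{i0},\dots,p_{id_i}\},\ i=1,2\}$.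
   Context: $\Delta^d=\{\boldsymbol{z}\in\mathbb{R}^d:1\ge z_1\ge\cdots\ge z_d\ge0\}$; $\boldsymbol{z}=(\boldsymbol{z}_1,\boldsymbol{z}_2)$. $B_i=\{(x_i,\boldsymbol{z}_i):x_i=p_{i0}+\sum_{j\in[d_i]}(p_{ij}-p_{i,j-1})z_{ij},\ \boldsymbol{z}_i\in\Delta^{d_i}\}$. Staircases: $\pi=(\pi_1,\dots,\pi_N)$, $\pi_t=(\pi_t(1),\pi_t(2))$, $\pi_t(1)\in\{1,2\}$ with $i$ occurring exactly $d_i$ times, $\pi_t(2)=|\{s\le t:\pi_s(1)=\pi_t(1)\}|$; $\Pi$ = set of staircases; $z_{\pi_t}=z_{\pi_t(1),\pi_t(2)}$; $\boldsymbol{j}^0=(0,0)$, $\boldsymbol{j}^t=\boldsymbol{j}^{t-1}+\boldsymbol{e}_{\pi_t(1)}$. For permutations $\rho_i$ of $\{0,\dots,d_i\}$: $T_i(\boldsymbol{z}_i)=\boldsymbol{\lambda}_i$ with $\lambda_{ij}=z_{ij}-z_{i,j+1}$, $j=0,\dots,d_i$ ($z_{i0}=1,z_{i,d_i+1}=0$), $T_i^{-1}:z_{ij}=\sum_{k\ge j}\lambda_{ik}$; $P^{\rho_i}$ permutation matrix with $(j,k)$ entry $1$ iff $j=\rho_i(k)$; $L^{\rho_i}=T_i^{-1}\circ P^{\rho_i}\circ T_i$, $L^\rho=(L^{\rho_1},L^{\rho_2})$. An MIP formulation of $S$: polyhedron plus binary restrictions whose projection on original variables is $S$; ideal: every vertex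 of the LP relaxation has the binary-restricted variables binary. *)

From HB Require Import structures.
From mathcomp Require Import all_boot all_order all_algebra all_fingroup.
From mathcomp Require Import reals.
Set Implicit Arguments. Unset Strict Implicit. Unset Printing Implicit Defensive.
Import Order.TTheory GRing.Theory Num.Theory.
Local Open Scope ring_scope.

Section Defs.
Variable R : realType.

(* z : 'rV_d encodes (z_1,...,z_d); zext z j = z_j with the conventions
   z_0 = 1 and z_j = 0 for j > d (in particular z_{d+1} = 0). *)
Definition zext (d : nat) (z : 'rV[R]_d) (j : nat) : R :=
  nth 0 (1 :: [seq z ord0 i | i <- enum 'I_d]) j.

Definition inDelta (d : nat) (z : 'rV[R]_d) : Prop :=
  forall j : nat, (j <= d)%N -> zext z j.+1 <= zext z j.

Definition Tmap (d : nat) (z : 'rV[R]_d) : 'I_d.+1 -> R :=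
  fun j => zext z j - zext z j.+1.

Definition Tinv (d : nat) (lam : 'I_d.+1 -> R) : 'rV[R]_d :=
  \row_(j < d) \sum_(k < d.+1 | (j.+1 <= k)%N) lam k.

Definition Pmap (d : nat) (rho : {perm 'I_d.+1}) (lam : 'I_d.+1 -> R)
  : 'I_d.+1 -> R :=
  fun j => \sum_(k < d.+1) (if j == rho k then 1 else 0) * lam k.

Definition Lmap (d : nat) (rho : {perm 'I_d.+1}) (z : 'rV[R]_d) : 'rV[R]_d :=
  Tinv (Pmap rho (Tmap z)).

Definition inB (d : nat) (p : 'I_d.+1 -> R) (x : R) (z : 'rV[R]_d) : Prop :=
  x = p ord0 + \sum_(j < d) (p (inord j.+1) - p (inord j)) * z ord0 j
  /\ inDelta z.

(* Staircases: a sequence pi over 'I_2 (0 stands for coordinate 1,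
   1 for coordinate 2) in which coordinate i occurs exactly d_i times. *)
Definition staircase (d1 d2 : nat) (pi : seq 'I_2) : Prop :=
  count (pred1 0) pi = d1 /\ count (pred1 1) pi = d2.

Definition jvec (pi : seq 'I_2) (t : nat) : nat * nat :=
  (count (pred1 0) (take t pi), count (pred1 1) (take t pi)).

Definition psi (d1 d2 : nat) (f1 f2 : R -> R)
  (p1 : 'I_d1.+1 -> R) (p2 : 'I_d2.+1 -> R)
  (r1 : {perm 'I_d1.+1}) (r2 : {perm 'I_d2.+1}) (j : nat * nat) : R :=
  f1 (p1 (r1 (inord j.1))) * f2 (p2 (r2 (inord j.2))).

(* z_{pi_t} = z_{pi_t(1), pi_t(2)}; note pi_t(2) = (j^t)_{pi_t(1)} *)
Definition zpi (d1 d2 : nat) (z1 : 'rV[R]_d1) (z2 : 'rV[R]_d2)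
  (pi : seq 'I_2) (t : nat) : R :=
  if nth 0 pi t.-1 == 0 then zext z1 (jvec pi t).1 else zext z2 (jvec pi t).2.

Definition stair_sum (ps : nat * nat -> R) (d1 d2 : nat)
  (z1 : 'rV[R]_d1) (z2 : 'rV[R]_d2) (pi : seq 'I_2) : R :=
  ps (jvec pi 0) +
  \sum_(t < size pi) (ps (jvec pi t.+1) - ps (jvec pi t)) * zpi z1 z2 pi t.+1.

Definition enc_ok (d K : nat) (eta : 'I_d.+1 -> 'I_K -> bool)
  (z : 'rV[R]_d) (del : 'rV[R]_K) : Prop :=
  forall k : 'I_K,
    \sum_(j < d.+1 | eta j k) (zext z j - zext z j.+1) <= del ord0 k /\
    \sum_(j < d.+1 | ~~ eta j k) (zext z j - zext z j.+1) <= 1 - del ord0 k.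

Record point (d1 d2 K1 K2 : nat) := Point {
  px1 : R; px2 : R; pz1 : 'rV[R]_d1; pz2 : 'rV[R]_d2; pmu : R;
  pdel1 : 'rV[R]_K1; pdel2 : 'rV[R]_K2 }.

Definition pcomb (d1 d2 K1 K2 : nat) (t : R) (a b : point d1 d2 K1 K2) :=
  Point (t * px1 a + (1 - t) * px1 b) (t * px2 a + (1 - t) * px2 b)
        (t *: pz1 a + (1 - t) *: pz1 b) (t *: pz2 a + (1 - t) *: pz2 b)
        (t * pmu a + (1 - t) * pmu b)
        (t *: pdel1 a + (1 - t) *: pdel1 b) (t *: pdel2 a + (1 - t) *: pdel2 b).

Definition extreme_point (d1 d2 K1 K2 : nat)
  (S : point d1 d2 K1 K2 -> Prop) (v : point d1 d2 K1 K2) : Prop :=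
  S v /\ forall (a b : point d1 d2 K1 K2) (t : R),
    S a -> S b -> 0 < t < 1 -> v = pcomb t a b -> a = b.

Definition binary_row (K : nat) (del : 'rV[R]_K) : Prop :=
  forall k : 'I_K, del ord0 k = 0 \/ del ord0 k = 1.

Definition unit_row (K : nat) (del : 'rV[R]_K) : Prop :=
  forall k : 'I_K, 0 <= del ord0 k <= 1.

(* The LP relaxation (polyhedron) of the formulation of Corollary 1:
   delta in [0,1]^K instead of {0,1}^K. *)
Definition relaxation (d1 d2 : nat) (p1 : 'I_d1.+1 -> R) (p2 : 'I_d2.+1 -> R)
  (f1 f2 : R -> R) (s1 : {perm 'I_d1.+1}) (s2 : {perm 'I_d2.+1})
  (t1 : {perm 'I_d1.+1}) (t2 : {perm 'I_d2.+1})
  (K1 K2 : nat) (eta1 : 'I_d1.+1 -> 'I_K1 -> bool) (eta2 : 'I_d2.+1 -> 'I_K2 -> bool)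
  (v : point d1 d2 K1 K2) : Prop :=
  [/\ inB p1 (px1 v) (pz1 v) /\ inB p2 (px2 v) (pz2 v),
      unit_row (pdel1 v) /\ unit_row (pdel2 v),
      enc_ok eta1 (pz1 v) (pdel1 v) /\ enc_ok eta2 (pz2 v) (pdel2 v),
      (exists (z1' : 'rV[R]_d1) (z2' : 'rV[R]_d2),
         Lmap s1 z1' = pz1 v /\ Lmap s2 z2' = pz2 v /\
         forall pi, staircase d1 d2 pi ->
           pmu v <= stair_sum (psi f1 f2 p1 p2 s1 s2) z1' z2' pi) &
      (exists (z1'' : 'rV[R]_d1) (z2'' : 'rV[R]_d2),
         Lmap t1 z1'' = pz1 v /\ Lmap t2 z2'' = pz2 v /\
         forall pi, staircase d1 d2 pi ->
           pmu v >= stair_sum (psi f1 f2 p1 p2 t1 t2) z1'' z2'' pi)].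

End Defs.

(* Writing λ = T(z), the map L^ρ only permutes the λ-coordinates; hence it permutes
   the vertices [vtx a] of Δ^d and its inverse preserves Δ^d.  Merging the
   coordinates of z'_1 and z'_2 in nonincreasing order gives a staircase π along
   which t ↦ z'_{π_t} decreases, and Abel summation along π writes (z'_1, z'_2) as a
   convex combination of the vertex pairs (vtx j^t_1, vtx j^t_2) and the staircase
   sum as the same combination of the ψ(j^t).  So every point of the relaxation
   agrees, except in μ, with a convex combination A of lifted grid points
   (p_{1a_1}, p_{2a_2}, f_1 f_2) with μ(A) ≥ μ (from σ), and with another one B with
   μ(B) ≤ μ (from τ).  An extreme point lies on the segment [B, A], so it equals A
   or B, and then one of the grid points, where δ is binary.
   Conversely, at a grid point ψ^σ is a product of nondecreasing factors, so the
   staircase sums dominate ψ^σ(a), while the staircase through a is tight; with τ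
   the same holds with the inequalities reversed, which pins μ = f_1 f_2 once δ,
   hence z, is binary. *)

From mathcomp Require Import all_boot all_order all_algebra all_fingroup.
From mathcomp Require Import reals ring lra.
Import Order.TTheory GRing.Theory Num.Theory.
Local Open Scope ring_scope.
Set Implicit Arguments. Unset Strict Implicit. Unset Printing Implicit Defensive.

Section Simplex.
Variable R : realType.
Implicit Types (d : nat) (t : R).

Lemma zext0 d (z : 'rV[R]_d) : zext z 0 = 1.
Proof. by []. Qed.

Lemma zextS d (z : 'rV[R]_d) (j : 'I_d) : zext z j.+1 = z ord0 j.
Proof. by rewrite /zext /= (nth_map j) ?size_enum_ord // nth_ord_enum. Qed.

Lemma zext_gt d (z : 'rV[R]_d) j : (d < j)%N -> zext z j = 0.
Proof. by case: j => // j hj; rewrite /zext /= nth_default // size_map size_enum_ord. Qed.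

Lemma zext_inj d (a b : 'rV[R]_d) : zext a =1 zext b -> a = b.
Proof. by move=> h; apply/rowP => j; rewrite -!zextS h. Qed.

Lemma zext_comb d t (a b : 'rV[R]_d) m :
  zext (t *: a + (1 - t) *: b) m = t * zext a m + (1 - t) * zext b m.
Proof.
case: m => [|m]; first by rewrite !zext0; ring.
have [hm|hm] := ltnP m d; last by rewrite !zext_gt //; ring.
by rewrite -[m]/(val (Ordinal hm)) !zextS !mxE.
Qed.

Lemma inDelta_nonincr d (z : 'rV[R]_d) : inDelta z -> forall j, zext z j.+1 <= zext z j.
Proof. by move=> hz j; have [/hz //|hj] := leqP j d; rewrite !zext_gt // ltnW. Qed.

(* [Tmap z], i.e. the paper's λ = T(z), extended to all indices j : nat. *)
Definition lam d (z : 'rV[R]_d) (j : nat) : R := zext z j - zext z j.+1.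

Lemma lam_ge0 d (z : 'rV[R]_d) j : inDelta z -> 0 <= lam z j.
Proof. by move=> /inDelta_nonincr hz; rewrite subr_ge0. Qed.

Lemma zext_lam d (z : 'rV[R]_d) j : zext z j = \sum_(k < d.+1 | (j <= k)%N) lam z k.
Proof.
have [hj|hj] := leqP j d.+1; last first.
  rewrite zext_gt ?big_pred0 // => [k|]; last exact: ltnW.
  by apply/negbTE; rewrite -ltnNge (ltn_trans _ hj).
rewrite -(big_geq_mkord _ _ xpredT) /lam.
under eq_bigr => k _ do rewrite -opprB.
by rewrite sumrN telescope_sumr // opprB (zext_gt z (ltnSn d)) subr0.
Qed.

Lemma sum_lam d (z : 'rV[R]_d) : \sum_(k < d.+1) lam z k = 1.
Proof. by rewrite -(zext0 z) zext_lam. Qed.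

Lemma lam_inj d (a b : 'rV[R]_d) : (forall k : 'I_d.+1, lam a k = lam b k) -> a = b.
Proof. by move=> h; apply: zext_inj => j; rewrite !zext_lam; apply: eq_bigr. Qed.

Definition vtx d (a : 'I_d.+1) : 'rV[R]_d := \row_(j < d) (j < a)%:R.

Lemma zext_vtx d (a : 'I_d.+1) m : zext (vtx a) m = (m <= a)%:R.
Proof.
case: m => // m; have [hm|hm] := ltnP m d.
  by rewrite -[m]/(val (Ordinal hm)) zextS mxE.
by rewrite zext_gt // leqNgt ltnS (leq_trans (leq_ord a)).
Qed.

Lemma lam_vtx d (a : 'I_d.+1) m : lam (vtx a) m = (m == a)%:R.
Proof. by rewrite /lam !zext_vtx; case: ltngtP; rewrite ?subrr ?subr0. Qed.

Lemma threshold_nonincr (a j : nat) : ((j.+1 <= a)%:R : R) <= (j <= a)%:R.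
Proof. by rewrite ler_nat; case: leqP => // /ltnW ->. Qed.

Lemma inDelta_vtx d (a : 'I_d.+1) : inDelta (vtx a).
Proof. by move=> j _; rewrite !zext_vtx threshold_nonincr. Qed.

Lemma sum_eq_indicator n (P : pred 'I_n) (x : 'I_n) :
  \sum_(k < n | P k) (k == x)%:R = (P x)%:R :> R.
Proof.
rewrite big_mkcond (bigD1 x) //= eqxx big1 ?addr0; first by case: (P x).
by move=> i /negbTE ->; rewrite if_same.
Qed.

Lemma Pmap_perm d (rho : {perm 'I_d.+1}) (l : 'I_d.+1 -> R) k :
  Pmap rho l k = l (rho^-1 k)%g.
Proof.
rewrite /Pmap (bigD1 (rho^-1 k)%g) //= permKV eqxx mul1r big1 ?addr0 // => i hi.
by case: eqP => [e|_]; [rewrite e permK eqxx in hi | rewrite mul0r].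
Qed.

Lemma sum_geq_recl n (F : 'I_n -> R) (j : 'I_n) :
  \sum_(k < n | (j <= k)%N) F k = F j + \sum_(k < n | (j < k)%N) F k.
Proof.
rewrite (bigD1 j) //=; congr (_ + _); apply: eq_bigl => k.
by rewrite ltn_neqAle andbC eq_sym val_eqE.
Qed.

Lemma zext_Lmap d (rho : {perm 'I_d.+1}) (z : 'rV[R]_d) j :
  zext (Lmap rho z) j = \sum_(k < d.+1 | (j <= k)%N) lam z (rho^-1 k)%g.
Proof.
case: j => [|j].
  rewrite zext0 (eq_bigl xpredT) // -(sum_lam z).
  exact: (reindex_inj (@perm_inj _ rho^-1)).
have [hj|hj] := ltnP j d.
  by rewrite -[j]/(val (Ordinal hj)) zextS mxE; apply: eq_bigr => k _; rewrite Pmap_perm.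
rewrite zext_gt ?big_pred0 // => k.
by apply/negbTE; rewrite -ltnNge ltnS (leq_trans _ hj) // -ltnS.
Qed.

Lemma lam_Lmap d (rho : {perm 'I_d.+1}) (z : 'rV[R]_d) (k : 'I_d.+1) :
  lam (Lmap rho z) k = lam z (rho^-1 k)%g.
Proof. by rewrite {1}/lam !zext_Lmap sum_geq_recl addrK. Qed.

Lemma Lmap_inj d (rho : {perm 'I_d.+1}) : injective (@Lmap R d rho).
Proof. by move=> a b e; apply: lam_inj => k; rewrite -[k](permK rho) -!lam_Lmap e. Qed.

Lemma Lmap_vtx d (rho : {perm 'I_d.+1}) (a : 'I_d.+1) : Lmap rho (vtx a) = vtx (rho a).
Proof. by apply: lam_inj => k; rewrite lam_Lmap !lam_vtx !val_eqE (canF_eq (permKV rho)). Qed.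

Lemma Lmap_eq_vtx d (rho : {perm 'I_d.+1}) (y : 'rV[R]_d) (a : 'I_d.+1) :
  Lmap rho y = vtx a -> y = vtx (rho^-1 a)%g.
Proof. by rewrite -{1}(permKV rho a) -Lmap_vtx => /Lmap_inj. Qed.

Lemma Lmap_comb d (rho : {perm 'I_d.+1}) t (a b : 'rV[R]_d) :
  Lmap rho (t *: a + (1 - t) *: b) = t *: Lmap rho a + (1 - t) *: Lmap rho b.
Proof.
apply: zext_inj => m; rewrite zext_comb !zext_Lmap !big_distrr -big_split /=.
by apply: eq_bigr => k _; rewrite /lam !zext_comb; ring.
Qed.

Lemma inDelta_Lmap d (rho : {perm 'I_d.+1}) (z : 'rV[R]_d) :
  inDelta (Lmap rho z) -> inDelta z.
Proof.
move=> hz j hj; rewrite -subr_ge0.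
by have := lam_ge0 (rho (inord j)) hz; rewrite lam_Lmap permK /lam inordK.
Qed.

(* z = \sum_i c i *: vtx (b i) with \sum_i c i = 1 (the case m = 0). *)
Definition vtx_combo d (I : finType) (c : I -> R) (b : I -> 'I_d.+1) (z : 'rV[R]_d) :=
  forall m, zext z m = \sum_i c i * (m <= b i)%:R.

Section VtxCombo.
Variables (d : nat) (I : finType) (c : I -> R) (b : I -> 'I_d.+1) (z : 'rV[R]_d).
Hypothesis hz : vtx_combo c b z.

Lemma vtx_combo_sum1 : \sum_i c i = 1.
Proof. by have := hz 0; rewrite zext0 => ->; apply: eq_bigr => i _; rewrite mulr1. Qed.

Lemma vtx_comboE : z = \sum_i c i *: vtx (b i).
Proof. by apply/rowP => j; rewrite summxE -zextS hz; apply: eq_bigr => i _; rewrite !mxE. Qed.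

Lemma lam_vtx_combo j : lam z j = \sum_i c i * (j == b i)%:R.
Proof.
rewrite /lam !hz -sumrB; apply: eq_bigr => i _.
by rewrite -mulrBr -lam_vtx /lam !zext_vtx.
Qed.

Lemma vtx_combo_Lmap (rho : {perm 'I_d.+1}) : vtx_combo c (fun i => rho (b i)) (Lmap rho z).
Proof.
move=> m; rewrite zext_Lmap.
under eq_bigr => k _ do rewrite lam_vtx_combo.
rewrite exchange_big; apply: eq_bigr => i _ /=; rewrite -big_distrr /=; congr (_ * _).
under eq_bigr => k _ do rewrite val_eqE (canF_eq (permKV rho)).
exact: (sum_eq_indicator (fun k : 'I_d.+1 => (m <= k)%N)).
Qed.

End VtxCombo.

Lemma sum_vtx_steps d (p : 'I_d.+1 -> R) (a : 'I_d.+1) :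
  \sum_(j < d) (p (inord j.+1) - p (inord j)) * (j < a)%:R = p a - p ord0.
Proof.
under eq_bigr => j _ do rewrite mulr_natr mulrb.
rewrite -big_mkcond /= -(big_ord_widen _ (fun j => p (inord j.+1) - p (inord j)) (leq_ord a)).
rewrite -(big_mkord xpredT (fun j => p (inord j.+1) - p (inord j))) telescope_sumr //.
by rewrite inord_val; congr (_ - p _); apply/val_inj; rewrite /= inordK.
Qed.


Lemma inB_vtx d (p : 'I_d.+1 -> R) (a : 'I_d.+1) : inB p (p a) (vtx a).
Proof.
split; last exact: inDelta_vtx.
by under eq_bigr => j _ do rewrite mxE; rewrite sum_vtx_steps addrC subrK.
Qed.

Lemma inB_vtxE d (p : 'I_d.+1 -> R) x (a : 'I_d.+1) : inB p x (vtx a) -> x = p a.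
Proof. by case=> -> _; case: (inB_vtx p a). Qed.

Lemma inB_vtx_combo d (I : finType) (p : 'I_d.+1 -> R) x (z : 'rV[R]_d)
    (c : I -> R) (b : I -> 'I_d.+1) :
  inB p x z -> vtx_combo c b z -> x = \sum_i c i * p (b i).
Proof.
move=> [-> _] hz.
have -> : \sum_(j < d) (p (inord j.+1) - p (inord j)) * z ord0 j =
          \sum_i c i * (p (b i) - p ord0).
  under eq_bigr => j _ do rewrite -zextS hz big_distrr.
  rewrite exchange_big; apply: eq_bigr => i _ /=.
  by rewrite -sum_vtx_steps big_distrr; apply: eq_bigr => j _; rewrite mulrCA.
rewrite -[X in X + _]mul1r -(vtx_combo_sum1 hz) big_distrl -big_split /=.
by apply: eq_bigr => i _; rewrite -mulrDr addrC subrK.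
Qed.

Lemma inB_comb d (p : 'I_d.+1 -> R) t xa xb (za zb : 'rV[R]_d) :
  0 <= t <= 1 -> inB p xa za -> inB p xb zb ->
  inB p (t * xa + (1 - t) * xb) (t *: za + (1 - t) *: zb).
Proof.
move=> /andP[t0 t1] [-> da] [-> db]; split.
  rewrite mulrDr [in X in _ + X]mulrDr !big_distrr addrACA -big_split /=.
  by congr (_ + _); [ring | apply: eq_bigr => j _; rewrite !mxE; ring].
by move=> j hj; rewrite !zext_comb; have := da j hj; have := db j hj; nra.
Qed.

Definition ecode d K (eta : 'I_d.+1 -> 'I_K -> bool) (a : 'I_d.+1) : 'rV[R]_K :=
  \row_k (eta a k)%:R.

Lemma unit_row_ecode d K (eta : 'I_d.+1 -> 'I_K -> bool) a : unit_row (ecode eta a).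
Proof. by move=> k; rewrite mxE; case: (eta a k); rewrite ?ler01 ?lexx. Qed.

Lemma binary_row_ecode d K (eta : 'I_d.+1 -> 'I_K -> bool) a : binary_row (ecode eta a).
Proof. by move=> k; rewrite mxE; case: (eta a k); [right | left]. Qed.

Lemma unit_row_comb K t (da db : 'rV[R]_K) : 0 <= t <= 1 ->
  unit_row da -> unit_row db -> unit_row (t *: da + (1 - t) *: db).
Proof.
move=> /andP[t0 t1] ha hb k; rewrite !mxE.
by case/andP: (ha k) => ? ?; case/andP: (hb k) => ? ?; apply/andP; split; nra.
Qed.

Lemma sum_lam_vtx d (a : 'I_d.+1) (Q : pred 'I_d.+1) :
  \sum_(j < d.+1 | Q j) lam (vtx a) j = (Q a)%:R :> R.
Proof. by under eq_bigr => j _ do rewrite lam_vtx val_eqE; apply: sum_eq_indicator. Qed.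

Section Encoding.
Variables (d K : nat) (eta : 'I_d.+1 -> 'I_K -> bool).

Lemma enc_ok_vtx a : enc_ok eta (vtx a) (ecode eta a).
Proof.
move=> k; rewrite mxE !(sum_lam_vtx a).
by case: (eta a k); rewrite /= ?subrr ?subr0.
Qed.

Lemma enc_okE z del : enc_ok eta z del ->
  forall k, del ord0 k = \sum_(j < d.+1 | eta j k) lam z j.
Proof.
move=> h k; have [h1 h2] := h k.
have := sum_lam z; rewrite (bigID (fun j => eta j k)) /= => hs.
by apply/le_anti; rewrite h1 andbT; move: h2; rewrite -hs; lra.
Qed.

Lemma enc_ok_vtx_combo (I : finType) z del (c : I -> R) (b : I -> 'I_d.+1) :
  enc_ok eta z del -> vtx_combo c b z -> del = \sum_i c i *: ecode eta (b i).
Proof.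
move=> he hz; apply/rowP => k; rewrite summxE (enc_okE he).
under eq_bigr => j _ do rewrite (lam_vtx_combo hz).
rewrite exchange_big; apply: eq_bigr => i _ /=; rewrite !mxE -big_distrr /=.
by under eq_bigr => j _ do rewrite val_eqE; rewrite (sum_eq_indicator (eta^~ k)).
Qed.

Lemma enc_ok_comb t za zb da db : 0 <= t <= 1 ->
  enc_ok eta za da -> enc_ok eta zb db ->
  enc_ok eta (t *: za + (1 - t) *: zb) (t *: da + (1 - t) *: db).
Proof.
move=> /andP[t0 t1] ha hb k; rewrite !mxE.
have combE (Q : pred 'I_d.+1) :
    \sum_(j < d.+1 | Q j) lam (t *: za + (1 - t) *: zb) j
    = t * \sum_(j < d.+1 | Q j) lam za j + (1 - t) * \sum_(j < d.+1 | Q j) lam zb j.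
  rewrite !big_distrr -big_split /=; apply: eq_bigr => j _.
  by rewrite /lam !zext_comb; ring.
rewrite !combE; case: (ha k) => a1 a2; case: (hb k) => b1 b2; split; nra.
Qed.

Hypothesis eta_inj : forall a a' : 'I_d.+1, eta a =1 eta a' -> a = a'.

Lemma enc_ok_binary z del : inDelta z -> enc_ok eta z del -> binary_row del ->
  exists a, z = vtx a /\ del = ecode eta a.
Proof.
move=> hz he hb.
have lam0 j : 0 <= lam z j := lam_ge0 j hz.
have lam_le_sum (Q : pred 'I_d.+1) j : Q j -> lam z j <= \sum_(i < d.+1 | Q i) lam z i.
  by move=> qj; rewrite (bigD1 j) //= lerDl sumr_ge0.
have etaE (j : 'I_d.+1) : 0 < lam z j -> forall k, eta j k = (del ord0 k == 1).
  move=> hj k; have [h1 h2] := he k.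
  case: (hb k) => e; rewrite e ?subrr in h1 h2; rewrite e.
    rewrite eq_sym oner_eq0; apply/negbTE/negP => ej.
    by have := lt_le_trans hj (le_trans (lam_le_sum _ j ej) h1); rewrite ltxx.
  rewrite eqxx; apply: contraT => ej.
  by have := lt_le_trans hj (le_trans (lam_le_sum _ j ej) h2); rewrite ltxx.
have [j0 hj0] : exists j0 : 'I_d.+1, 0 < lam z j0.
  have : \sum_(j < d.+1) lam z j != 0 by rewrite sum_lam oner_eq0.
  by rewrite psumr_neq0 // => /hasP[j _ /= hj]; exists j.
have lamE (j : 'I_d.+1) : lam z j = (j == j0)%:R.
  have others (i : 'I_d.+1) : i != j0 -> lam z i = 0.
    move=> ni; apply/le_anti; rewrite lam0 andbT leNgt; apply: contra ni => hi.
    by apply/eqP/eta_inj => k; rewrite (etaE _ hi) (etaE _ hj0).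
  case: eqVneq => [->|/others //]; rewrite -(sum_lam z) (bigD1 j0) //=.
  by rewrite big1 ?addr0 // => i; apply: others.
have zE : z = vtx j0 by apply: lam_inj => j; rewrite lamE lam_vtx val_eqE.
exists j0; split => //; apply/rowP => k; rewrite mxE (etaE _ hj0).
by case: (hb k) => ->; rewrite ?eqxx // eq_sym oner_eq0.
Qed.

End Encoding.

End Simplex.

Arguments vtx {R d} a.
Arguments ecode {R d K} eta a.

Lemma ord2_neq0 (i : 'I_2) : i != 0 -> i = 1.
Proof. by case: i => [[|[|//]]] // ? _; apply/val_inj. Qed.

Section Staircase.
Variable R : realType.
Implicit Types (pi q : seq 'I_2) (ps : nat * nat -> R).

Definition jcnt pi t (i : 'I_2) := count (pred1 i) (take t pi).

Lemma jcnt0 pi i : jcnt pi 0 i = 0%N.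
Proof. by rewrite /jcnt take0. Qed.

Lemma jcnt_size pi i : jcnt pi (size pi) i = count (pred1 i) pi.
Proof. by rewrite /jcnt take_size. Qed.

Lemma jcnt_le pi t i : (jcnt pi t i <= count (pred1 i) pi)%N.
Proof. by rewrite -{2}(cat_take_drop t pi) count_cat leq_addr. Qed.

Lemma jcntS pi t i : (t < size pi)%N -> jcnt pi t.+1 i = addn (jcnt pi t i) (nth 0 pi t == i).
Proof. by move=> ht; rewrite /jcnt (take_nth 0) // -cats1 count_cat /= addn0 eq_sym. Qed.

Lemma jcnt_rcons q j t i : (t <= size q)%N -> jcnt (rcons q j) t i = jcnt q t i.
Proof. by move=> ht; rewrite /jcnt -cats1 takel_cat. Qed.

Definition zsel (Z1 Z2 : nat -> R) (i : 'I_2) : nat -> R := if i == 0 then Z1 else Z2.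

Definition zat (Z1 Z2 : nat -> R) pi t : R :=
  if nth 0 pi t.-1 == 0 then Z1 (jvec pi t).1 else Z2 (jvec pi t).2.

Definition ssum ps (Z1 Z2 : nat -> R) pi : R :=
  ps (jvec pi 0) +
  \sum_(t < size pi) (ps (jvec pi t.+1) - ps (jvec pi t)) * zat Z1 Z2 pi t.+1.

Lemma stair_sumE ps d1 d2 (z1 : 'rV[R]_d1) (z2 : 'rV[R]_d2) pi :
  stair_sum ps z1 z2 pi = ssum ps (zext z1) (zext z2) pi.
Proof. by []. Qed.

Lemma zatE Z1 Z2 pi t :
  zat Z1 Z2 pi t = zsel Z1 Z2 (nth 0 pi t.-1) (jcnt pi t (nth 0 pi t.-1)).
Proof. by rewrite /zat /zsel; case: eqVneq => [->|/ord2_neq0 ->]. Qed.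

Lemma eq_ssum ps ps' Z1 Z1' Z2 Z2' pi :
  ps =1 ps' -> Z1 =1 Z1' -> Z2 =1 Z2' -> ssum ps Z1 Z2 pi = ssum ps' Z1' Z2' pi.
Proof.
move=> hps h1 h2; rewrite /ssum hps; congr (_ + _); apply: eq_bigr => t _.
by rewrite /zat h1 h2 !hps.
Qed.

Lemma ssumN ps Z1 Z2 pi : ssum (fun j => - ps j) Z1 Z2 pi = - ssum ps Z1 Z2 pi.
Proof. by rewrite /ssum opprD -sumrN; congr (_ + _); apply: eq_bigr => t _; ring. Qed.

Lemma ssum_comb ps t Z1 Z2 Z1' Z2' pi :
  ssum ps (fun m => t * Z1 m + (1 - t) * Z1' m) (fun m => t * Z2 m + (1 - t) * Z2' m) pi
  = t * ssum ps Z1 Z2 pi + (1 - t) * ssum ps Z1' Z2' pi.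
Proof.
rewrite /ssum !mulrDr !big_distrr addrACA -big_split /=; congr (_ + _); first ring.
by apply: eq_bigr => s _; rewrite /zat; case: ifP => _; ring.
Qed.

Lemma sum_by_parts (a u : nat -> R) n :
  a 0%N * u 0%N + \sum_(t < n) (a t.+1 - a t) * u t.+1 =
  \sum_(t < n.+1) (u t - u t.+1) * a t + a n * u n.+1.
Proof.
elim: n => [|n IH]; first by rewrite big_ord0 big_ord1; ring.
by rewrite big_ord_recr /= addrA IH [in RHS]big_ord_recr /=; ring.
Qed.

(* Along a staircase on which [zpath] decreases, the decrements [zweight] are
   barycentric weights. *)
Definition zpath (Z1 Z2 : nat -> R) pi t : R :=
  if t == 0%N then 1 else if (t <= size pi)%N then zat Z1 Z2 pi t else 0.

Lemma zpath0 Z1 Z2 pi : zpath Z1 Z2 pi 0 = 1.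
Proof. by []. Qed.

Lemma zpath_gt Z1 Z2 pi t : (size pi < t)%N -> zpath Z1 Z2 pi t = 0.
Proof. by case: t => // t ht; rewrite /zpath leqNgt ht. Qed.

Lemma zpathS Z1 Z2 pi t : (t < size pi)%N -> zpath Z1 Z2 pi t.+1 = zat Z1 Z2 pi t.+1.
Proof. by rewrite /zpath /= => ->. Qed.

Definition zweight (Z1 Z2 : nat -> R) pi t : R := zpath Z1 Z2 pi t - zpath Z1 Z2 pi t.+1.

Lemma ssum_abel ps Z1 Z2 pi :
  ssum ps Z1 Z2 pi = \sum_(t < (size pi).+1) zweight Z1 Z2 pi t * ps (jvec pi t).
Proof.
have := sum_by_parts (fun t => ps (jvec pi t)) (zpath Z1 Z2 pi) (size pi).
rewrite zpath0 [zpath _ _ _ (size pi).+1]zpath_gt // mulr0 addr0 mulr1 => <-.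
by congr (_ + _); apply: eq_bigr => t _; rewrite zpathS.
Qed.

Lemma zat_step Z1 Z2 pi i m t : (t < size pi)%N ->
  ((m <= jcnt pi t.+1 i)%:R - (m <= jcnt pi t i)%:R) * zat Z1 Z2 pi t.+1
  = ((m <= jcnt pi t.+1 i)%:R - (m <= jcnt pi t i)%:R) * zsel Z1 Z2 i m.
Proof.
move=> ht; rewrite zatE /= !jcntS //.
case: (eqVneq (nth 0 pi t) i) => [->|_]; last by rewrite !addn0 subrr !mul0r.
rewrite eqxx !addn1; case: (ltngtP m (jcnt pi t i).+1) => [hm|hm|->] //.
  by rewrite -ltnS hm subrr !mul0r.
by rewrite leqNgt (ltnW hm) subrr !mul0r.
Qed.

Lemma zsel_decomp Z1 Z2 pi i : zsel Z1 Z2 i 0 = 1 ->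
  (forall m, (count (pred1 i) pi < m)%N -> zsel Z1 Z2 i m = 0) ->
  forall m, zsel Z1 Z2 i m =
    \sum_(t < (size pi).+1) zweight Z1 Z2 pi t * (m <= jcnt pi t i)%:R.
Proof.
move=> Z0 Zgt m.
have := sum_by_parts (fun t => (m <= jcnt pi t i)%:R) (zpath Z1 Z2 pi) (size pi).
rewrite [zpath _ _ _ (size pi).+1]zpath_gt // mulr0 addr0 => <-.
under eq_bigr => t _ do rewrite zpathS // (zat_step _ _ _ _ (ltn_ord t)).
rewrite -big_distrl /=.
rewrite -(big_mkord xpredT (fun t => (m <= jcnt pi t.+1 i)%:R - (m <= jcnt pi t i)%:R)).
rewrite telescope_sumr // jcnt_size jcnt0 mulr1.
case: m => [|m]; first by rewrite !leq0n subrr mul0r addr0 Z0.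
rewrite ltn0 add0r subr0; case: ltnP => [_|hm]; first by rewrite mul1r.
by rewrite Zgt ?mulr0.
Qed.

Lemma zpath_rcons Z1 Z2 q j t : (t <= size q)%N ->
  zpath Z1 Z2 (rcons q j) t = zpath Z1 Z2 q t.
Proof.
case: t => // t ht; have ht' : (t < size (rcons q j))%N by rewrite size_rcons ltnW.
by rewrite !zpathS // !zatE /= nth_rcons ht jcnt_rcons.
Qed.

Lemma count_rcons_ord2 q (j x : 'I_2) :
  count (pred1 x) (rcons q j) = addn (count (pred1 x) q) (j == x).
Proof. by rewrite -cats1 count_cat /= addn0. Qed.

Lemma zpath_rcons_last Z1 Z2 q j :
  zpath Z1 Z2 (rcons q j) (size q).+1 = zsel Z1 Z2 j (count (pred1 j) q).+1.
Proof.
rewrite zpathS ?size_rcons // zatE /= nth_rcons ltnn eqxx.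
by rewrite /jcnt take_oversize ?size_rcons // count_rcons_ord2 eqxx addn1.
Qed.

Lemma count_ord2 q : addn (count (pred1 0) q) (count (pred1 1) q) = size q.
Proof.
rewrite -(count_predC (pred1 0)); congr addn; apply: eq_count => x /=.
by case: (eqVneq x 0) => [->|/ord2_neq0 ->].
Qed.

Lemma zpath_ge0 Z1 Z2 pi : (forall j, 0 <= Z1 j) -> (forall j, 0 <= Z2 j) ->
  forall t, 0 <= zpath Z1 Z2 pi t.
Proof. by move=> h1 h2 t; rewrite /zpath /zat; repeat case: ifP => _. Qed.

Lemma nonincr_ge0 (Z : nat -> R) d : (forall j, Z j.+1 <= Z j) ->
  (forall m, (d < m)%N -> Z m = 0) -> forall j, 0 <= Z j.
Proof.
move=> hZ hgt j; have mono k : Z (j + k)%N <= Z j.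
  by elim: k => [|k IH]; rewrite ?addn0 // addnS (le_trans (hZ _)).
by rewrite -(hgt (j + d.+1)%N) ?mono // addnS ltnS leq_addl.
Qed.

Section SortedStaircase.
Variables (Z1 Z2 : nat -> R) (d1 d2 : nat).
Hypotheses (Z1_0 : Z1 0%N = 1) (Z2_0 : Z2 0%N = 1).
Hypotheses (Z1_nonincr : forall j, Z1 j.+1 <= Z1 j) (Z2_nonincr : forall j, Z2 j.+1 <= Z2 j).
Hypotheses (Z1_gt : forall m, (d1 < m)%N -> Z1 m = 0)
           (Z2_gt : forall m, (d2 < m)%N -> Z2 m = 0).

Let Z1_ge0 : forall j, 0 <= Z1 j := nonincr_ge0 Z1_nonincr Z1_gt.
Let Z2_ge0 : forall j, 0 <= Z2 j := nonincr_ge0 Z2_nonincr Z2_gt.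

(* Greedy merge: append the coordinate whose next value is larger. *)
Lemma sorted_prefix k : (k <= d1 + d2)%N -> exists q : seq 'I_2,
  [/\ size q = k, leq (count (pred1 0) q) d1, leq (count (pred1 1) q) d2,
      forall t, (t < size q)%N -> zpath Z1 Z2 q t.+1 <= zpath Z1 Z2 q t &
      Z1 (count (pred1 0) q).+1 <= zpath Z1 Z2 q (size q) /\
      Z2 (count (pred1 1) q).+1 <= zpath Z1 Z2 q (size q)].
Proof.
elim: k => [|k IH] hk.
  by exists [::]; split => //; rewrite zpath0; split; [rewrite -Z1_0 | rewrite -Z2_0].
have [q [sq c0 c1 sorted [room1 room2]]] := IH (ltnW hk).
have hsum := count_ord2 q; rewrite sq in hsum.
have sortedS (j : 'I_2) : zsel Z1 Z2 j (count (pred1 j) q).+1 <= zpath Z1 Z2 q (size q) ->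
    forall t, (t < size (rcons q j))%N ->
    zpath Z1 Z2 (rcons q j) t.+1 <= zpath Z1 Z2 (rcons q j) t.
  move=> hj t; rewrite size_rcons ltnS leq_eqVlt => /predU1P[->|ht].
    by rewrite zpath_rcons_last zpath_rcons.
  by rewrite !zpath_rcons ?sorted // ltnW.
have [/andP[lt0 le21]|hb] := boolP (leq (count (pred1 0) q).+1 d1 &&
  (Z2 (count (pred1 1) q).+1 <= Z1 (count (pred1 0) q).+1)).
  exists (rcons q 0); rewrite !count_rcons_ord2 size_rcons zpath_rcons_last /= addn0 addn1.
  split; rewrite ?sq // => t; rewrite -sq -(size_rcons q 0); exact: sortedS.
have lt1 : leq (count (pred1 1) q).+1 d2.
  rewrite ltnNge; apply: contra hb => le1.
  have e1 : count (pred1 1) q = d2 by apply/eqP; rewrite eqn_leq c1.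
  by rewrite -(ltn_add2r (count (pred1 1) q)) hsum e1 hk /= Z2_gt ?e1 ?Z1_ge0.
exists (rcons q 1); rewrite !count_rcons_ord2 size_rcons zpath_rcons_last /= addn0 addn1.
split; rewrite ?sq //; first by move=> t; rewrite -sq -(size_rcons q 1); exact: sortedS.
split; last exact: Z2_nonincr.
rewrite negb_and -ltNge -leqNgt in hb.
by case/orP: hb => [hd|/ltW //]; rewrite Z1_gt ?Z2_ge0.
Qed.

Lemma sorted_staircase_decomp : exists pi, [/\ staircase d1 d2 pi,
  forall t, 0 <= zweight Z1 Z2 pi t,
  forall m, Z1 m = \sum_(t < (size pi).+1) zweight Z1 Z2 pi t * (m <= (jvec pi t).1)%:R &
  forall m, Z2 m = \sum_(t < (size pi).+1) zweight Z1 Z2 pi t * (m <= (jvec pi t).2)%:R].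
Proof.
have [q [sq c0 c1 sorted _]] := sorted_prefix (leqnn (d1 + d2)).
have hsum := count_ord2 q; rewrite sq in hsum.
have st : staircase d1 d2 q.
  split; apply/eqP; rewrite eqn_leq ?c0 ?c1 /=.
    by rewrite -(leq_add2r (count (pred1 1) q)) hsum leq_add2l.
  by rewrite -(leq_add2l (count (pred1 0) q)) hsum leq_add2r.
exists q; split => //.
- move=> t; rewrite /zweight subr_ge0; have [/sorted //|ht] := ltnP t (size q).
  by rewrite zpath_gt ?ltnS // (zpath_ge0 _ Z1_ge0 Z2_ge0).
- by apply: (zsel_decomp (i := 0)) => // m; rewrite st.1; apply: Z1_gt.
- by apply: (zsel_decomp (i := 1)) => // m; rewrite st.2; apply: Z2_gt.
Qed.

End SortedStaircase.

Lemma threshold_combo_eq (I : finType) (w : I -> R) (x : I -> nat) a :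
  (forall i, 0 <= w i) -> (forall m, (m <= a)%:R = \sum_i w i * (m <= x i)%:R) ->
  forall i, w i != 0 -> x i = a.
Proof.
move=> w0 hx i wi.
have w1 : \sum_j w j = 1 by rewrite [RHS](hx 0%N); apply: eq_bigr => j _; rewrite mulr1.
have above : \sum_j w j * (a < x j)%:R = 0 by rewrite -hx ltnn.
have below : \sum_j w j * (x j < a)%:R = 0.
  have top : \sum_j w j * (a <= x j)%:R = \sum_j w j by rewrite -hx leqnn w1.
  transitivity (\sum_j (w j - w j * (a <= x j)%N%:R)); last by rewrite sumrB top subrr.
  by apply: eq_bigr => j _; rewrite ltnNge; case: (a <= x j)%N => /=; ring.
have vanish b : \sum_j w j * (b j)%:R = 0 -> w i * (b i)%:R = 0.
  by move/psumr_eq0P; apply => // j _; rewrite mulr_ge0.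
move: (vanish _ above) (vanish _ below); case: ltngtP => // _ /eqP.
  by rewrite mulr1 (negbTE wi).
by move=> _ /eqP; rewrite mulr1 (negbTE wi).
Qed.

Lemma ssum_threshold ps d1 d2 a1 a2 : (a1 <= d1)%N -> (a2 <= d2)%N ->
  exists pi, staircase d1 d2 pi /\
    ssum ps (fun m => (m <= a1)%:R) (fun m => (m <= a2)%:R) pi = ps (a1, a2).
Proof.
move=> ha1 ha2.
have gt_zero (a d : nat) : (a <= d)%N -> forall m, (d < m)%N -> ((m <= a)%:R : R) = 0.
  by move=> ha m hm; rewrite leqNgt (leq_ltn_trans ha hm).
have [pi [st w0 h1 h2]] := sorted_staircase_decomp (erefl _) (erefl _)
  (@threshold_nonincr R a1) (@threshold_nonincr R a2) (gt_zero _ _ ha1) (gt_zero _ _ ha2).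
exists pi; split => //; rewrite ssum_abel.
set w := zweight (fun m => (m <= a1)%:R) (fun m => (m <= a2)%:R) pi in w0 h1 h2 *.
have w1 : \sum_(t < (size pi).+1) w t = 1.
  by rewrite [RHS](h1 0%N); apply: eq_bigr => t _; rewrite mulr1.
rewrite -[RHS]mul1r -w1 big_distrl; apply: eq_bigr => t _ /=.
have [->|wt] := eqVneq (w t) 0; first by rewrite !mul0r.
rewrite -[jvec pi t]/((jvec pi t).1, (jvec pi t).2).
have w0' (s : 'I_(size pi).+1) : 0 <= w s := w0 s.
by rewrite (threshold_combo_eq w0' h1 wt) (threshold_combo_eq w0' h2 wt).
Qed.

Lemma jvecS pi t : (t < size pi)%N -> jvec pi t.+1 =
  if nth 0 pi t == 0 then ((jvec pi t).1.+1, (jvec pi t).2)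
  else ((jvec pi t).1, (jvec pi t).2.+1).
Proof.
move=> ht; rewrite -[jvec pi t.+1]/(jcnt pi t.+1 0, jcnt pi t.+1 1) !jcntS //.
by case: (eqVneq (nth 0 pi t) 0) => [->|/ord2_neq0 ->]; rewrite /= addn0 addn1.
Qed.

Lemma zatS Z1 Z2 pi t : (t < size pi)%N -> zat Z1 Z2 pi t.+1 =
  if nth 0 pi t == 0 then Z1 (jvec pi t).1.+1 else Z2 (jvec pi t).2.+1.
Proof. by move=> ht; rewrite /zat (jvecS ht) /=; case: (nth 0 pi t == 0). Qed.

Lemma ssum_threshold_ge d1 d2 pi (g h : nat -> R) a1 a2 : staircase d1 d2 pi ->
  (forall j k, (j <= k <= d1)%N -> g j <= g k) ->
  (forall j k, (j <= k <= d2)%N -> h j <= h k) ->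
  (a1 <= d1)%N -> (a2 <= d2)%N ->
  g a1 * h a2 <=
  ssum (fun j => g j.1 * h j.2) (fun m => (m <= a1)%:R) (fun m => (m <= a2)%:R) pi.
Proof.
move=> [s1 s2] hg hh ha1 ha2.
set ps := fun j : nat * nat => g j.1 * h j.2.
set Z1 := fun m => (m <= a1)%:R : R; set Z2 := fun m => (m <= a2)%:R : R.
suff partial t : (t <= size pi)%N ->
    g (minn (jvec pi t).1 a1) * h (minn (jvec pi t).2 a2) <=
    ps (jvec pi 0) +
    \sum_(0 <= s < t) (ps (jvec pi s.+1) - ps (jvec pi s)) * zat Z1 Z2 pi s.+1.
  have := partial _ (leqnn _); rewrite big_mkord.
  by rewrite -[jvec pi (size pi)]/(jcnt pi _ 0, jcnt pi _ 1) !jcnt_size s1 s2 !(minn_idPr _).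
elim: t => [|t IH] ht; first by rewrite big_geq // addr0 /jvec take0 /ps /= !min0n.
have [c1 c2] : ((jvec pi t).1 <= d1 /\ (jvec pi t).2 <= d2)%N by rewrite -s1 -s2 !jcnt_le.
rewrite big_nat_recr // addrA (zatS _ _ ht) (jvecS ht).
move: (IH (ltnW ht)) c1 c2; set S := ps (jvec pi 0) + _.
case: (jvec pi t) => k1 k2; rewrite /ps /Z1 /Z2 /=.
case: ifP => _ hS c1 c2 /=.
- have [hk|hk] := leqP k1.+1 a1; last first.
    by rewrite (minn_idPr (hk : a1 <= k1)%N) in hS; rewrite mulr_natr mulr0n addr0.
  rewrite (minn_idPl (ltnW hk)) mulr_natr mulr1n in hS *.
  have := hg k1 k1.+1; rewrite leqnSn (leq_trans hk ha1) => /(_ isT).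
  have := hh (minn k2 a2) k2; rewrite geq_minl c2 => /(_ isT).
  by nra.
- have [hk|hk] := leqP k2.+1 a2; last first.
    by rewrite (minn_idPr (hk : a2 <= k2)%N) in hS; rewrite mulr_natr mulr0n addr0.
  rewrite (minn_idPl (ltnW hk)) mulr_natr mulr1n in hS *.
  have := hh k2 k2.+1; rewrite leqnSn (leq_trans hk ha2) => /(_ isT).
  have := hg (minn k1 a1) k1; rewrite geq_minl c1 => /(_ isT).
  by nra.
Qed.

End Staircase.

Section PointConvexity.
Variables (R : realType) (d1 d2 K1 K2 : nat).
Local Notation point := (point R d1 d2 K1 K2).
Implicit Types (a b v : point) (t : R).

Definition pbase v := (px1 v, px2 v, pz1 v, pz2 v, pdel1 v, pdel2 v).

Lemma point_eq a b : pbase a = pbase b -> pmu a = pmu b -> a = b.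
Proof. by case: a b => ? ? ? ? ? ? ? [? ? ? ? ? ? ?] [-> -> -> -> -> ->] /= ->. Qed.

Lemma pcomb0 a b : pcomb 0 a b = b.
Proof.
case: a b => ? ? ? ? ? ? ? [*].
by rewrite /pcomb /= subr0 !(mul0r, scale0r, mul1r, scale1r, add0r).
Qed.

Lemma pcomb1 a b : pcomb 1 a b = a.
Proof.
case: a b => ? ? ? ? ? ? ? [*].
by rewrite /pcomb /= subrr !(mul0r, scale0r, mul1r, scale1r, addr0).
Qed.

Lemma pcombxx t a : pcomb t a a = a.
Proof.
have combR (x : R) : t * x + (1 - t) * x = x by ring.
have combV (V : lmodType R) (x : V) : t *: x + (1 - t) *: x = x.
  by rewrite -scalerDl addrC subrK scale1r.
by case: a => *; rewrite /pcomb /= !combR !combV.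
Qed.

Lemma sum_ord0_neq1 (c : 'I_0 -> R) : \sum_i c i != 1.
Proof. by rewrite big_ord0 eq_sym oner_eq0. Qed.

Definition pcombo n (c : 'I_n -> R) (w : 'I_n -> point) : point :=
  Point (\sum_i c i * px1 (w i)) (\sum_i c i * px2 (w i))
        (\sum_i c i *: pz1 (w i)) (\sum_i c i *: pz2 (w i))
        (\sum_i c i * pmu (w i))
        (\sum_i c i *: pdel1 (w i)) (\sum_i c i *: pdel2 (w i)).

Section Normalize.
Variables (n : nat) (c : 'I_n.+1 -> R).
Hypotheses (c_ge0 : forall i, 0 <= c i) (c_sum1 : \sum_i c i = 1).

Let crest i := c (lift ord0 i) / (1 - c ord0).

Lemma sum_lift_ord0 : \sum_i c (lift ord0 i) = 1 - c ord0.
Proof. by move: c_sum1; rewrite big_ord_recl => <-; rewrite addrC addKr. Qed.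

Lemma ord0_weight_le1 : c ord0 <= 1.
Proof. by rewrite -subr_ge0 -sum_lift_ord0 sumr_ge0. Qed.

Lemma crest_ge0 i : 0 <= crest i.
Proof. by rewrite divr_ge0 // subr_ge0 ord0_weight_le1. Qed.

Lemma crest_sum1 : c ord0 != 1 -> \sum_i crest i = 1.
Proof. by move=> c0; rewrite -mulr_suml sum_lift_ord0 divff // subr_eq0 eq_sym. Qed.

Lemma sum_recl_normalized (V : lmodType R) (X : 'I_n.+1 -> V) :
  \sum_i c i *: X i = c ord0 *: X ord0 + (1 - c ord0) *: \sum_i crest i *: X (lift ord0 i).
Proof.
rewrite big_ord_recl; congr (_ + _); have [c0|c0] := eqVneq (c ord0) 1.
  have rest0 : \sum_i c (lift ord0 i) = 0 by rewrite sum_lift_ord0 c0 subrr.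
  have crest0 i : c (lift ord0 i) = 0.
    exact: (psumr_eq0P (fun j _ => c_ge0 (lift ord0 j)) rest0 (i := i)).
  by rewrite c0 subrr scale0r big1 // => i _; rewrite crest0 scale0r.
rewrite scaler_sumr; apply: eq_bigr => i _; rewrite scalerA mulrC divfK //.
by rewrite subr_eq0 eq_sym.
Qed.

Lemma pcombo_recl (w : 'I_n.+1 -> point) :
  pcombo c w = pcomb (c ord0) (w ord0) (pcombo crest (fun i => w (lift ord0 i))).
Proof.
by rewrite /pcombo /pcomb /= !(sum_recl_normalized (V := R^o)) !sum_recl_normalized.
Qed.

End Normalize.

Lemma pbase_pcomb t a a' b b' : pbase a = pbase a' -> pbase b = pbase b' ->
  pbase (pcomb t a b) = pbase (pcomb t a' b').
Proof.
case: a a' b b' => ? ? ? ? ? ? ? [? ? ? ? ? ? ?] [? ? ? ? ? ? ?] [? ? ? ? ? ? ?].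
by case=> -> -> -> -> -> -> [-> -> -> -> -> ->].
Qed.

Lemma pcomb_between a b v : pbase a = pbase v -> pbase b = pbase v ->
  pmu b <= pmu v <= pmu a -> exists2 t, 0 <= t <= 1 & v = pcomb t a b.
Proof.
move=> ea eb /andP[bv va]; have [eab|nab] := eqVneq (pmu a) (pmu b).
  exists 1; first by rewrite ler01 lexx.
  by rewrite pcomb1; apply: point_eq => //; apply/le_anti; rewrite va eab.
have ba : 0 < pmu a - pmu b by rewrite subr_gt0 lt_neqAle eq_sym nab (le_trans bv va).
exists ((pmu v - pmu b) / (pmu a - pmu b)).
  apply/andP; split; first by rewrite divr_ge0 ?(ltW ba) // subr_ge0.
  by rewrite ler_pdivrMr // mul1r lerD2r.
symmetry; apply: point_eq; first by rewrite (pbase_pcomb _ ea eb) pcombxx.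
by rewrite /pcomb /=; field; rewrite subr_eq0.
Qed.

Variable S : point -> Prop.
Hypothesis S_convex : forall a b t, S a -> S b -> 0 <= t <= 1 -> S (pcomb t a b).

Lemma pcombo_in n (c : 'I_n -> R) (w : 'I_n -> point) :
  (forall i, S (w i)) -> (forall i, 0 <= c i) -> \sum_i c i = 1 -> S (pcombo c w).
Proof.
elim: n c w => [|n IH] c w Sw c0 c1; first by have := sum_ord0_neq1 c; rewrite c1 eqxx.
rewrite pcombo_recl //; have [->|ne1] := eqVneq (c ord0) 1; first by rewrite pcomb1.
apply: S_convex => //; last by rewrite c0 ord0_weight_le1.
by apply: IH => // [i|]; [apply: crest_ge0 | apply: crest_sum1].
Qed.

Lemma extreme_point_segment v a b t : extreme_point S v -> S a -> S b ->
  0 <= t <= 1 -> v = pcomb t a b -> v = a \/ v = b.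
Proof.
move=> [_ ext] Sa Sb /andP[t0 t1] ev.
have [t0'|t0'] := eqVneq t 0; first by right; rewrite ev t0' pcomb0.
have [t1'|t1'] := eqVneq t 1; first by left; rewrite ev t1' pcomb1.
have ab : a = b by apply: (ext a b t Sa Sb _ ev); rewrite !lt_neqAle eq_sym t0' t0 t1' t1.
by left; rewrite ev ab pcombxx.
Qed.

Lemma extreme_point_pcombo v n (c : 'I_n -> R) (w : 'I_n -> point) :
  extreme_point S v -> (forall i, S (w i)) -> (forall i, 0 <= c i) -> \sum_i c i = 1 ->
  v = pcombo c w -> exists i, v = w i.
Proof.
elim: n c w v => [|n IH] c w v ext Sw c0 c1.
  by have := sum_ord0_neq1 c; rewrite c1 eqxx.
rewrite pcombo_recl //; have [->|ne1] := eqVneq (c ord0) 1.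
  by rewrite pcomb1; exists ord0.
set crest := fun i => c (lift ord0 i) / (1 - c ord0) => ev.
have Srest : S (pcombo crest (fun i => w (lift ord0 i))).
  by apply: pcombo_in => // [i|]; [apply: crest_ge0 | apply: crest_sum1].
have c01 : 0 <= c ord0 <= 1 by rewrite c0 ord0_weight_le1.
have [->|vrest] := extreme_point_segment ext (Sw ord0) Srest c01 ev.
  by exists ord0.
have [i ->] : exists i, v = w (lift ord0 i).
  by apply: (IH _ _ _ ext _ _ _ vrest) => // [i|]; [apply: crest_ge0 | apply: crest_sum1].
by exists (lift ord0 i).
Qed.

End PointConvexity.

Lemma nondecr_inord (R : realType) d (F : 'I_d.+1 -> R) :
  (forall j k : 'I_d.+1, (j <= k)%N -> F j <= F k) ->
  forall j k, (j <= k <= d)%N -> F (inord j) <= F (inord k).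
Proof.
move=> hF j k /andP[jk kd]; apply: hF.
by rewrite !inordK // ltnS // (leq_trans jk).
Qed.

Lemma stair_sum_vtx_attained (R : realType) d1 d2 (ps : nat * nat -> R)
    (a1 : 'I_d1.+1) (a2 : 'I_d2.+1) :
  exists2 pi, staircase d1 d2 pi &
    stair_sum ps (vtx a1) (vtx a2) pi = ps (nat_of_ord a1, nat_of_ord a2).
Proof.
have [pi [st e]] := ssum_threshold ps (leq_ord a1) (leq_ord a2).
by exists pi; rewrite // stair_sumE (eq_ssum _ (frefl _) (zext_vtx R _) (zext_vtx R _)).
Qed.

Section Formulation.
Variables (R : realType) (d1 d2 K1 K2 : nat).
Variables (p1 : 'I_d1.+1 -> R) (p2 : 'I_d2.+1 -> R) (f1 f2 : R -> R).
Variables (s1 t1 : {perm 'I_d1.+1}) (s2 t2 : {perm 'I_d2.+1}).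
Variables (eta1 : 'I_d1.+1 -> 'I_K1 -> bool) (eta2 : 'I_d2.+1 -> 'I_K2 -> bool).
Hypothesis hs1 : forall j k : 'I_d1.+1, (j <= k)%N -> f1 (p1 (s1 j)) <= f1 (p1 (s1 k)).
Hypothesis hs2 : forall j k : 'I_d2.+1, (j <= k)%N -> f2 (p2 (s2 j)) <= f2 (p2 (s2 k)).
Hypothesis ht1 : forall j k : 'I_d1.+1, (j <= k)%N -> f1 (p1 (t1 j)) <= f1 (p1 (t1 k)).
Hypothesis ht2 : forall j k : 'I_d2.+1, (j <= k)%N -> f2 (p2 (t2 j)) >= f2 (p2 (t2 k)).
Hypothesis heta1 : forall a a' : 'I_d1.+1, eta1 a =1 eta1 a' -> a = a'.
Hypothesis heta2 : forall a a' : 'I_d2.+1, eta2 a =1 eta2 a' -> a = a'.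

Local Notation point := (point R d1 d2 K1 K2).
Local Notation P := (relaxation p1 p2 f1 f2 s1 s2 t1 t2 eta1 eta2).

Definition grid_point (a1 : 'I_d1.+1) (a2 : 'I_d2.+1) : point :=
  Point (p1 a1) (p2 a2) (vtx a1) (vtx a2) (f1 (p1 a1) * f2 (p2 a2))
        (ecode eta1 a1) (ecode eta2 a2).

Lemma binary_grid_point a1 a2 :
  binary_row (pdel1 (grid_point a1 a2)) /\ binary_row (pdel2 (grid_point a1 a2)).
Proof. by split; apply: binary_row_ecode. Qed.

Lemma grid_value_le_stair_sum pi (a1 : 'I_d1.+1) (a2 : 'I_d2.+1) : staircase d1 d2 pi ->
  f1 (p1 a1) * f2 (p2 a2) <=
  stair_sum (psi f1 f2 p1 p2 s1 s2) (vtx (s1^-1 a1)%g) (vtx (s2^-1 a2)%g) pi.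
Proof.
move=> st; rewrite stair_sumE (eq_ssum _ (frefl _) (zext_vtx R _) (zext_vtx R _)).
have := ssum_threshold_ge st (nondecr_inord hs1) (nondecr_inord hs2)
  (leq_ord (s1^-1 a1)%g) (leq_ord (s2^-1 a2)%g).
by rewrite !inord_val !permKV.
Qed.

Lemma stair_sum_le_grid_value pi (a1 : 'I_d1.+1) (a2 : 'I_d2.+1) : staircase d1 d2 pi ->
  stair_sum (psi f1 f2 p1 p2 t1 t2) (vtx (t1^-1 a1)%g) (vtx (t2^-1 a2)%g) pi
  <= f1 (p1 a1) * f2 (p2 a2).
Proof.
move=> st; rewrite -lerN2 stair_sumE -ssumN.
rewrite (eq_ssum (ps' := fun j => f1 (p1 (t1 (inord j.1))) * - f2 (p2 (t2 (inord j.2))))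
  _ _ (zext_vtx R _) (zext_vtx R _)) => [|j]; last by rewrite /psi mulrN.
have ht2N (j k : 'I_d2.+1) : (j <= k)%N -> - f2 (p2 (t2 j)) <= - f2 (p2 (t2 k)).
  by move=> jk; rewrite lerN2 ht2.
have := ssum_threshold_ge st (nondecr_inord ht1) (nondecr_inord ht2N)
  (leq_ord (t1^-1 a1)%g) (leq_ord (t2^-1 a2)%g).
by rewrite !inord_val !permKV mulrN.
Qed.

Lemma relaxation_grid_point a1 a2 : P (grid_point a1 a2).
Proof.
split; rewrite /=.
- by split; apply: inB_vtx.
- by split; apply: unit_row_ecode.
- by split; apply: enc_ok_vtx.
- exists (vtx (s1^-1 a1)%g), (vtx (s2^-1 a2)%g); rewrite !Lmap_vtx !permKV.
  by do 2!split => //; move=> pi; apply: grid_value_le_stair_sum.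
- exists (vtx (t1^-1 a1)%g), (vtx (t2^-1 a2)%g); rewrite !Lmap_vtx !permKV.
  by do 2!split => //; move=> pi; apply: stair_sum_le_grid_value.
Qed.

Lemma relaxation_convex a b t : P a -> P b -> 0 <= t <= 1 -> P (pcomb t a b).
Proof.
case: a b => xa1 xa2 za1 za2 ma da1 da2 [xb1 xb2 zb1 zb2 mb db1 db2].
move=> [/= [Ba1 Ba2] [Ua1 Ua2] [Ea1 Ea2]
  [ya1 [ya2 [La1 [La2 Sa]]]] [wa1 [wa2 [Ma1 [Ma2 Ta]]]]].
move=> [/= [Bb1 Bb2] [Ub1 Ub2] [Eb1 Eb2]
  [yb1 [yb2 [Lb1 [Lb2 Sb]]]] [wb1 [wb2 [Mb1 [Mb2 Tb]]]]].
move=> t01; have /andP[t0 t1'] := t01; split => /=.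
- by split; apply: inB_comb.
- by split; apply: unit_row_comb.
- by split; apply: enc_ok_comb.
- exists (t *: ya1 + (1 - t) *: yb1), (t *: ya2 + (1 - t) *: yb2).
  rewrite !Lmap_comb La1 La2 Lb1 Lb2; do 2!split => //; move=> pi st.
  rewrite stair_sumE (eq_ssum _ (frefl _) (zext_comb t _ _) (zext_comb t _ _)).
  by rewrite ssum_comb -!stair_sumE; have := Sa pi st; have := Sb pi st; nra.
- exists (t *: wa1 + (1 - t) *: wb1), (t *: wa2 + (1 - t) *: wb2).
  rewrite !Lmap_comb Ma1 Ma2 Mb1 Mb2; do 2!split => //; move=> pi st.
  rewrite stair_sumE (eq_ssum _ (frefl _) (zext_comb t _ _) (zext_comb t _ _)).
  by rewrite ssum_comb -!stair_sumE; have := Ta pi st; have := Tb pi st; nra.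
Qed.

Definition grid_combo (A : point) := exists n (c : 'I_n -> R) a1 a2,
  [/\ forall i, 0 <= c i, \sum_i c i = 1 & A = pcombo c (fun i => grid_point (a1 i) (a2 i))].

Lemma relaxation_grid_combo A : grid_combo A -> P A.
Proof.
move=> [n [c [a1 [a2 [c0 c1 ->]]]]].
apply: pcombo_in c0 c1 => [u v t|i]; first exact: relaxation_convex.
exact: relaxation_grid_point.
Qed.

Lemma relaxation_stair_decomp (r1 : {perm 'I_d1.+1}) (r2 : {perm 'I_d2.+1}) v y1 y2 :
  P v -> Lmap r1 y1 = pz1 v -> Lmap r2 y2 = pz2 v ->
  exists2 A, grid_combo A & pbase A = pbase v /\
    exists2 pi, staircase d1 d2 pi & stair_sum (psi f1 f2 p1 p2 r1 r2) y1 y2 pi = pmu A.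
Proof.
move=> [[B1 B2] _ [E1 E2] _ _] L1 L2.
have D1 : inDelta y1 by apply: (inDelta_Lmap (rho := r1)); rewrite L1; exact: B1.2.
have D2 : inDelta y2 by apply: (inDelta_Lmap (rho := r2)); rewrite L2; exact: B2.2.
have [pi [st w0 h1 h2]] := sorted_staircase_decomp (zext0 y1) (zext0 y2)
  (inDelta_nonincr D1) (inDelta_nonincr D2) (zext_gt y1) (zext_gt y2).
set w := zweight (zext y1) (zext y2) pi in w0 h1 h2.
pose c (t : 'I_(size pi).+1) := w t.
pose b1 (t : 'I_(size pi).+1) : 'I_d1.+1 := inord (jvec pi t).1.
pose b2 (t : 'I_(size pi).+1) : 'I_d2.+1 := inord (jvec pi t).2.
have C1 : vtx_combo c b1 y1.
  by move=> m; rewrite h1; apply: eq_bigr => t _; rewrite inordK // ltnS -st.1 jcnt_le.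
have C2 : vtx_combo c b2 y2.
  by move=> m; rewrite h2; apply: eq_bigr => t _; rewrite inordK // ltnS -st.2 jcnt_le.
have C1' := vtx_combo_Lmap C1 r1; rewrite L1 in C1'.
have C2' := vtx_combo_Lmap C2 r2; rewrite L2 in C2'.
exists (pcombo c (fun t => grid_point (r1 (b1 t)) (r2 (b2 t)))).
  exists (size pi).+1, c, (fun t => r1 (b1 t)), (fun t => r2 (b2 t)).
  by split => // [i|]; [exact: w0 | exact: vtx_combo_sum1 C1].
split; last by exists pi => //; rewrite stair_sumE ssum_abel.
rewrite /pbase /= [px1 v](inB_vtx_combo B1 C1') [px2 v](inB_vtx_combo B2 C2').
rewrite [pz1 v](vtx_comboE C1') [pz2 v](vtx_comboE C2').
by rewrite [pdel1 v](enc_ok_vtx_combo E1 C1') [pdel2 v](enc_ok_vtx_combo E2 C2').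
Qed.

Lemma relaxation_binary v : P v -> binary_row (pdel1 v) -> binary_row (pdel2 v) ->
  exists a1 a2, v = grid_point a1 a2.
Proof.
move=> [[B1 B2] _ [E1 E2] [y1 [y2 [L1 [L2 Sy]]]] [w1 [w2 [M1 [M2 Sw]]]]] b1 b2.
have [a1 [z1E del1E]] := enc_ok_binary heta1 B1.2 E1 b1.
have [a2 [z2E del2E]] := enc_ok_binary heta2 B2.2 E2 b2.
rewrite z1E in B1 L1 M1; rewrite z2E in B2 L2 M2.
exists a1, a2; apply: point_eq.
  by rewrite /pbase /= (inB_vtxE B1) (inB_vtxE B2) z1E z2E del1E del2E.
rewrite /= (Lmap_eq_vtx L1) (Lmap_eq_vtx L2) in Sy.
rewrite /= (Lmap_eq_vtx M1) (Lmap_eq_vtx M2) in Sw.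
apply/le_anti/andP; split.
- have [pi st] := stair_sum_vtx_attained (psi f1 f2 p1 p2 s1 s2) (s1^-1 a1)%g (s2^-1 a2)%g.
  by move=> e; move: (Sy pi st); rewrite e /psi /= !inord_val !permKV.
- have [pi st] := stair_sum_vtx_attained (psi f1 f2 p1 p2 t1 t2) (t1^-1 a1)%g (t2^-1 a2)%g.
  by move=> e; move: (Sw pi st); rewrite e /psi /= !inord_val !permKV.
Qed.

Lemma extreme_grid_combo v : extreme_point P v -> grid_combo v ->
  exists a1 a2, v = grid_point a1 a2.
Proof.
move=> ext [n [c [a1 [a2 [c0 c1 vE]]]]].
have [i ->] := extreme_point_pcombo relaxation_convex ext
  (fun i => relaxation_grid_point _ _) c0 c1 vE.
by exists (a1 i), (a2 i).
Qed.

Lemma extreme_relaxation v : extreme_point P v -> exists a1 a2, v = grid_point a1 a2.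
Proof.
move=> ext; have [_ _ _ [y1 [y2 [L1 [L2 Sy]]]] [w1 [w2 [M1 [M2 Sw]]]]] := ext.1.
have [A gA [eA [pi st muA]]] := relaxation_stair_decomp ext.1 L1 L2.
have [B gB [eB [pi' st' muB]]] := relaxation_stair_decomp ext.1 M1 M2.
have [t t01 vE] : exists2 t, 0 <= t <= 1 & v = pcomb t A B.
  by apply: pcomb_between => //; rewrite -muA -muB Sy ?Sw.
have [vA|vB] := extreme_point_segment ext
  (relaxation_grid_combo gA) (relaxation_grid_combo gB) t01 vE.
- by rewrite vA in ext *; apply: extreme_grid_combo.
- by rewrite vB in ext *; apply: extreme_grid_combo.
Qed.

End Formulation.

Theorem corollary1 (R : realType) (d1 d2 : nat)
  (hd1 : (1 <= d1)%N) (hd2 : (1 <= d2)%N)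
  (p1 : 'I_d1.+1 -> R) (p2 : 'I_d2.+1 -> R)
  (hp1 : forall j k : 'I_d1.+1, (j < k)%N -> p1 j < p1 k)
  (hp2 : forall j k : 'I_d2.+1, (j < k)%N -> p2 j < p2 k)
  (f1 f2 : R -> R)
  (s1 t1 : {perm 'I_d1.+1}) (s2 t2 : {perm 'I_d2.+1})
  (hs1 : forall j k : 'I_d1.+1, (j <= k)%N -> f1 (p1 (s1 j)) <= f1 (p1 (s1 k)))
  (hs2 : forall j k : 'I_d2.+1, (j <= k)%N -> f2 (p2 (s2 j)) <= f2 (p2 (s2 k)))
  (ht1 : forall j k : 'I_d1.+1, (j <= k)%N -> f1 (p1 (t1 j)) <= f1 (p1 (t1 k)))
  (ht2 : forall j k : 'I_d2.+1, (j <= k)%N -> f2 (p2 (t2 j)) >= f2 (p2 (t2 k)))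
  (eta1 : 'I_d1.+1 -> 'I_(up_log 2 d1.+1) -> bool)
  (eta2 : 'I_d2.+1 -> 'I_(up_log 2 d2.+1) -> bool)
  (heta1 : forall t t' : 'I_d1.+1, (forall k, eta1 t k = eta1 t' k) -> t = t')
  (heta2 : forall t t' : 'I_d2.+1, (forall k, eta2 t k = eta2 t' k) -> t = t') :
  let P := relaxation p1 p2 f1 f2 s1 s2 t1 t2 eta1 eta2 in
  (* MIP formulation: projection of P with binary delta onto (x, mu) *)
  (forall x1 x2 mu : R,
     (exists (j1 : 'I_d1.+1) (j2 : 'I_d2.+1),
        [/\ x1 = p1 j1, x2 = p2 j2 & mu = f1 x1 * f2 x2])
     <->
     (exists v, [/\ P v, binary_row (pdel1 v) /\ binary_row (pdel2 v),
                    px1 v = x1, px2 v = x2 & pmu v = mu]))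
  /\
  (* ideal: every vertex of the LP relaxation has binary delta *)
  (forall v, extreme_point P v -> binary_row (pdel1 v) /\ binary_row (pdel2 v)).
Proof.
move=> P; split=> [x1 x2 mu|v /(extreme_relaxation hs1 hs2 ht1 ht2) [a1 [a2 ->]]];
  last exact: binary_grid_point.
split=> [[a1 [a2 [-> -> ->]]]|[v [Pv [b1 b2] <- <- <-]]].
  exists (grid_point p1 p2 f1 f2 eta1 eta2 a1 a2); split=> //.
    exact: relaxation_grid_point.
  exact: binary_grid_point.
have [a1 [a2 ->]] := relaxation_binary heta1 heta2 Pv b1 b2.
by exists a1, a2.
Qed.
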